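(* Let $(\mathfrak g_1,\eta_1,\omega_1)$ and $(\mathfrak g_2,\eta_2,\omega_2)$ be two $(2n+1)$-dimensional almost cosymplectic (respectively, $\alpha$-cosymplectic, for a fixed $\alpha\in\mathbb R$) Lie algebras with $d\eta_1=d\eta_2=0$, and for $i=1,2$ let $\mathfrak h_i=\ker\eta_i$, $\Omega_i=\omega_i|_{\mathfrak h_i\times\mathfrak h_i}$ and $D_i=\mathrm{ad}_{\xi_i}|_{\mathfrak h_i}$, where $\xi_i$ is the Reeb vector of $(\eta_i,\omega_i)$. Then $(\mathfrak g_1,\eta_1,\omega_1)$ and $(\mathfrak g_2,\eta_2,\omega_2)$ are isomorphic if and only if there exists an isomorphism $\psi:(\mathfrak h_1,\Omega_1)\to(\mathfrak h_2,\Omega_2)$ of almost symplectic Lie algebras such that $\psi\circ D_1=D_2\circ\psi$.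
   Context: For a Lie algebra, $d\eta(x,y)=-\eta([x,y])$ and $d\omega(x,y,z)=-\omega([x,y],z)-\omega([y,z],x)-\omega([z,x],y)$. An almost cosymplectic structure on a $(2n+1)$-dimensional Lie algebra $\mathfrak g$ is $(\eta,\omega)$, $\eta\in\mathfrak g^*$, $\omega$ a $2$-form, with $\eta\wedge\omega^n\neq0$; its Reeb vector $\xi$ is the unique element with $\eta(\xi)=1$, $\omega(\xi,\cdot)=0$; it is $\alpha$-cosymplectic if $d\eta=0$ and $d\omega=2\alpha\,\eta\wedge\omega$. When $d\eta=0$, $\ker\eta$ is a Lie subalgebra, $\Omega$ is almost symplectic (i.e. $\Omega^n\ne0$) and $D_i$ is a derivation. Two almost cosymplectic Lie algebras are isomorphic if there is a Lie algebra isomorphism $\Psi:\mathfrak g_1\to\mathfrak g_2$ with $\Psi^*\omega_2=\omega_1$ and $\eta_2\circ\Psi=\eta_1$. Two almost symplectic Lie algebras $(\mathfrak h_1,\Omega_1),(\mathfrak h_2,\Omega_2)$ are isomorphic via a Lie algebra isomorphism $\psi$ with $\psi^*\Omega_2=\Omega_1$. *)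

From HB Require Import structures.
From mathcomp Require Import all_boot all_order all_algebra all_fingroup.
From mathcomp Require Import reals.
Set Implicit Arguments. Unset Strict Implicit. Unset Printing Implicit Defensive.
Import Order.TTheory GRing.Theory Num.Theory.
Local Open Scope ring_scope.

Section LieDefs.
Variable R : realType.

Definition is_lie_bracket (V : vectType R) (br : V -> V -> V) : Prop :=
  [/\ (forall a x y z, br (a *: x + y) z = a *: br x z + br y z),
      (forall a x y z, br z (a *: x + y) = a *: br z x + br z y),
      (forall x, br x x = 0) &
      (forall x y z, br x (br y z) + br y (br z x) + br z (br x y) = 0)].

Definition is_2form (V : vectType R) (om : V -> V -> R) : Prop :=
  [/\ (forall a x y z, om (a *: x + y) z = a * om x z + om y z),
      (forall a x y z, om z (a *: x + y) = a * om z x + om z y) &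
      (forall x, om x x = 0)].

(* (eta /\ omega^n)(v_0, ..., v_2n), up to a nonzero normalising constant. *)
Definition eta_wedge_omega_pow (V : vectType R) (n : nat) (eta : 'Hom(V, R^o))
    (om : V -> V -> R) (v : 'I_(n.*2.+1) -> V) : R :=
  \sum_(s : 'S_(n.*2.+1))
     (-1) ^+ s * ((eta (v (s ord0)) : R) *
        \prod_(k < n) om (v (s (inord k.*2.+1))) (v (s (inord k.*2.+2)))).

Arguments eta_wedge_omega_pow {V} n eta om v.

Definition almost_cosymplectic (V : vectType R) (n : nat) (eta : 'Hom(V, R^o))
    (om : V -> V -> R) : Prop :=
  is_2form om /\ exists v, eta_wedge_omega_pow n eta om v != 0.

Definition d1 (V : vectType R) (br : V -> V -> V) (eta : 'Hom(V, R^o)) x y : R :=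
  - (eta (br x y) : R).

Definition d2 (V : vectType R) (br : V -> V -> V) (om : V -> V -> R) x y z : R :=
  - om (br x y) z - om (br y z) x - om (br z x) y.

Definition wedge12 (V : vectType R) (eta : 'Hom(V, R^o)) (om : V -> V -> R) x y z : R :=
  (eta x : R) * om y z + (eta y : R) * om z x + (eta z : R) * om x y.

Definition closed_eta (V : vectType R) (br : V -> V -> V) (eta : 'Hom(V, R^o)) : Prop :=
  forall x y, d1 br eta x y = 0.

Definition alpha_cosymplectic (V : vectType R) (n : nat) (br : V -> V -> V)
    (alpha : R) (eta : 'Hom(V, R^o)) (om : V -> V -> R) : Prop :=
  [/\ almost_cosymplectic n eta om, closed_eta br eta &
      forall x y z, d2 br om x y z = 2 * alpha * wedge12 eta om x y z].

Definition is_reeb (V : vectType R) (eta : 'Hom(V, R^o)) (om : V -> V -> R) (xi : V) : Prop :=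
  (eta xi : R) = 1 /\ forall y, om xi y = 0.

Definition hker (V : vectType R) (eta : 'Hom(V, R^o)) := subvs_of (lker eta).

Definition hbr (V : vectType R) (br : V -> V -> V) (eta : 'Hom(V, R^o))
    (x y : hker eta) : hker eta := vsproj (lker eta) (br (vsval x) (vsval y)).

Definition hOmega (V : vectType R) (eta : 'Hom(V, R^o)) (om : V -> V -> R)
    (x y : hker eta) : R := om (vsval x) (vsval y).

Definition hD (V : vectType R) (br : V -> V -> V) (eta : 'Hom(V, R^o)) (xi : V)
    (x : hker eta) : hker eta := vsproj (lker eta) (br xi (vsval x)).

Definition acs_isomorphic (V1 V2 : vectType R)
    (br1 : V1 -> V1 -> V1) (eta1 : 'Hom(V1, R^o)) (om1 : V1 -> V1 -> R)
    (br2 : V2 -> V2 -> V2) (eta2 : 'Hom(V2, R^o)) (om2 : V2 -> V2 -> R) : Prop :=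
  exists Psi : 'Hom(V1, V2),
    [/\ bijective Psi,
        (forall x y, Psi (br1 x y) = br2 (Psi x) (Psi y)),
        (forall x y, om2 (Psi x) (Psi y) = om1 x y) &
        (forall x, (eta2 (Psi x) : R) = eta1 x)].

End LieDefs.

(* Since d eta = 0, h = ker eta contains [g, g], and g = h + R xi with
     [h + a xi, k + b xi] = [h, k]_h + a D k - b D h,   omega(h + a xi, k + b xi) = Omega(h, k).
   Hence (g, eta, omega) is determined by (h, Omega, D), and psi extends to g by xi1 |-> xi2.
   Conversely an isomorphism maps Reeb vector to Reeb vector, as the Reeb vector is unique:
   the difference of two would lie in ker eta and in the kernel of omega, and every slot of
   the alternating form eta /\ omega^n kills such a vector, so eta /\ omega^n would vanish. *)

From HB Require Import structures.
From mathcomp Require Import all_boot all_order all_algebra all_fingroup.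
From mathcomp Require Import reals zify.
From Stdlib Require Import FunctionalExtensionality.
Set Implicit Arguments. Unset Strict Implicit. Unset Printing Implicit Defensive.
Import Order.TTheory GRing.Theory Num.Theory.
Local Open Scope ring_scope.

Section LinearFun.
Variables (K : pzRingType) (U W : lmodType K) (f : U -> W).
Hypothesis f_lin : linear f.

Lemma linear_fun0 : f 0 = 0.
Proof. by apply: (addrI (f 0)); rewrite addr0 -{1}(scale1r (f 0)) -f_lin scale1r addr0. Qed.

Lemma linear_funD x y : f (x + y) = f x + f y.
Proof. by rewrite -[x in LHS]scale1r f_lin scale1r. Qed.

Lemma linear_funZ a x : f (a *: x) = a *: f x.
Proof. by rewrite -[a *: x]addr0 f_lin linear_fun0 addr0. Qed.

Lemma linear_funN x : f (- x) = - f x.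
Proof. by rewrite -scaleN1r linear_funZ scaleN1r. Qed.

End LinearFun.

Section HomOfLinear.
Variables (K : fieldType) (U W : vectType K).

Lemma hom_of_linear (f : U -> W) : linear f -> {g : 'Hom(U, W) | g =1 f}.
Proof.
move=> f_lin; pose g : {linear U -> W} := HB.pack f (GRing.isLinear.Build K U W *:%R f f_lin).
by exists (linfun g) => x; rewrite lfunE.
Qed.

End HomOfLinear.

Section AlternatingBilinear.
Variables (K : pzRingType) (U W : lmodType K) (f : U -> U -> W).
Hypotheses (f_linl : forall z, linear (f^~ z)) (f_linr : forall z, linear (f z)).
Hypothesis f_alt : forall x, f x x = 0.

Lemma alt_bilinear_anti x y : f x y = - f y x.
Proof.
apply/eqP; rewrite -addr_eq0; have := f_alt (x + y).
by rewrite (linear_funD (f_linl _)) !(linear_funD (f_linr _)) !f_alt add0r addr0 addrC => ->.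
Qed.

Lemma alt_bilinear_expand (xi h k : U) (a b : K) :
  f (h + a *: xi) (k + b *: xi) = f h k + a *: f xi k - b *: f xi h.
Proof.
rewrite (linear_funD (f_linl _)) !(linear_funD (f_linr _)) !(linear_funZ (f_linr _)).
rewrite (linear_funZ (f_linl k)) (linear_funZ (f_linl xi)) f_alt !scaler0 addr0.
by rewrite (alt_bilinear_anti h xi) scalerN addrAC.
Qed.

End AlternatingBilinear.

Section LieBracketForm.
Variables (R : realType) (V : vectType R).

Lemma lie_linearl (br : V -> V -> V) : is_lie_bracket br -> forall z, linear (br^~ z).
Proof. by case=> h _ _ _ z a x y; apply: h. Qed.

Lemma lie_linearr (br : V -> V -> V) : is_lie_bracket br -> forall z, linear (br z).
Proof. by case=> _ h _ _ z a x y; apply: h. Qed.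

Lemma form_linearl (om : V -> V -> R) : is_2form om -> forall z, linear (fun x => om x z : R^o).
Proof. by case=> h _ _ z a x y; apply: h. Qed.

Lemma form_linearr (om : V -> V -> R) : is_2form om -> forall z, linear (fun x => om z x : R^o).
Proof. by case=> _ h _ z a x y; apply: h. Qed.

Lemma lie_expand (br : V -> V -> V) : is_lie_bracket br -> forall xi h k (a b : R),
  br (h + a *: xi) (k + b *: xi) = br h k + a *: br xi k - b *: br xi h.
Proof. by move=> hbr; apply: alt_bilinear_expand; [exact: lie_linearl|exact: lie_linearr|case: hbr]. Qed.

Lemma form_anti (om : V -> V -> R) : is_2form om -> forall x y, om x y = - om y x.
Proof.
move=> hom x y; apply: (@alt_bilinear_anti _ _ R^o om).
- exact: form_linearl.
- exact: form_linearr.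
- by case: hom.
Qed.

Lemma form_expand (om : V -> V -> R) xi : is_2form om -> (forall y, om xi y = 0) ->
  forall h k (a b : R), om (h + a *: xi) (k + b *: xi) = om h k.
Proof.
move=> hom xi0 h k a b; rewrite (@alt_bilinear_expand _ _ R^o om) ?xi0 /GRing.scale /=.
- by rewrite !mulr0 subr0 addr0.
- exact: form_linearl.
- exact: form_linearr.
- by case: hom.
Qed.

End LieBracketForm.

Definition set_slot (T : Type) (N : nat) (w : 'I_N -> T) (k : 'I_N) (z : T) : 'I_N -> T :=
  fun i => if i == k then z else w i.

Lemma set_slot_out (T : Type) (N : nat) (w : 'I_N -> T) k z i :
  val i != val k -> set_slot w k z i = w i.
Proof. by rewrite val_eqE /set_slot => /negbTE ->. Qed.

Lemma set_slot_id (T : Type) (N : nat) (w : 'I_N -> T) k : set_slot w k (w k) = w.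
Proof. by apply: functional_extensionality => i; rewrite /set_slot; case: eqP => [->|]. Qed.

Section EtaWedgeOmegaPow.
Variables (R : realType) (V : vectType R) (n : nat) (eta : 'Hom(V, R^o)) (om : V -> V -> R).
Hypothesis form : is_2form om.
Local Notation N := n.*2.+1.
Local Notation ewo := (@eta_wedge_omega_pow R V n eta om).

Definition ewo_term (w : 'I_N -> V) : R :=
  (eta (w ord0) : R) * \prod_(m < n) om (w (inord m.*2.+1)) (w (inord m.*2.+2)).

Definition radical (u : V) : Prop := (eta u : R) = 0 /\ forall y, om u y = 0.

Lemma val_inord_odd (m : 'I_n) : val (inord m.*2.+1 : 'I_N) = m.*2.+1.
Proof. by apply: inordK; have := ltn_ord m; lia. Qed.

Lemma val_inord_even (m : 'I_n) : val (inord m.*2.+2 : 'I_N) = m.*2.+2.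
Proof. by apply: inordK; have := ltn_ord m; lia. Qed.

Lemma ord_slot_cases (k : 'I_N) :
  k = ord0 \/ exists m : 'I_n, val k = m.*2.+1 \/ val k = m.*2.+2.
Proof.
have [->|/negbTE k0] := eqVneq k ord0; [by left | right].
have kpos : (0 < k)%N by rewrite lt0n; apply: contraFneq k0 => /= k_eq0; apply/eqP/val_inj.
have hm : ((k.-1)./2 < n)%N by have := ltn_ord k; rewrite -(odd_double_half k.-1); lia.
exists (Ordinal hm) => /=; have := odd_double_half k.-1; case: (odd _) => /= ?; lia.
Qed.

Lemma ewo_term_pair (w : 'I_N -> V) (k : 'I_N) (m : 'I_n) z :
  val k = m.*2.+1 \/ val k = m.*2.+2 ->
  ewo_term (set_slot w k z) =
    om (set_slot w k z (inord m.*2.+1)) (set_slot w k z (inord m.*2.+2)) *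
    ((eta (w ord0) : R) * \prod_(m' < n | m' != m) om (w (inord m'.*2.+1)) (w (inord m'.*2.+2))).
Proof.
move=> km; rewrite /ewo_term (bigD1 m) //= mulrCA; congr (_ * (_ * _)).
  by rewrite set_slot_out //; case: km => ->.
apply: eq_bigr => m' m'm; rewrite -val_eqE /= in m'm.
by rewrite !set_slot_out //; rewrite ?val_inord_odd ?val_inord_even; case: km => ->; lia.
Qed.

Lemma ewo_term_slot (w : 'I_N -> V) (k : 'I_N) : exists (l : V -> R^o) (C : R),
  [/\ linear l, forall u, radical u -> l u = 0 &
      forall z, ewo_term (set_slot w k z) = l z * C].
Proof.
case: (ord_slot_cases k) => [->|[m km]].
  exists (fun z => eta z), (\prod_(m < n) om (w (inord m.*2.+1)) (w (inord m.*2.+2))).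
  split=> [a x y|u []//|z]; first exact: linearP.
  rewrite /ewo_term {1}/set_slot eqxx; congr (_ * _); apply: eq_bigr => m _.
  by rewrite !set_slot_out // ?val_inord_odd ?val_inord_even.
pose C := (eta (w ord0) : R) *
  \prod_(m' < n | m' != m) om (w (inord m'.*2.+1)) (w (inord m'.*2.+2)).
have [m1k|m2k] := km.
- exists (fun z => om z (w (inord m.*2.+2))), C.
  split=> [|u [_ u0]|z]; [exact: form_linearl|exact: u0|].
  rewrite (ewo_term_pair _ _ km) /set_slot -!val_eqE /= val_inord_odd val_inord_even m1k.
  by rewrite eqxx ifN // -!muln2; lia.
- exists (fun z => om (w (inord m.*2.+1)) z), C.
  split=> [|u [_ u0]|z]; [exact: form_linearr|by rewrite form_anti // u0 oppr0|].
  rewrite (ewo_term_pair _ _ km) /set_slot -!val_eqE /= val_inord_odd val_inord_even m2k.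
  by rewrite eqxx ifN // -!muln2; lia.
Qed.

Lemma ewoE v : ewo v = \sum_(s : 'S_N) (-1) ^+ s * ewo_term (fun i => v (s i)).
Proof. by []. Qed.

Lemma ewo_perm v (g : 'S_N) : ewo (fun i => v (g i)) = (-1) ^+ g * ewo v.
Proof.
rewrite !ewoE mulr_sumr [in RHS](reindex_inj (@mulIg _ g)) /=.
apply: eq_bigr => s _; rewrite odd_permM signr_addb mulrA.
have -> : (-1) ^+ g * ((-1) ^+ s * (-1) ^+ g) = (-1) ^+ s :> R.
  by rewrite mulrCA -expr2 sqrr_sign mulr1.
by congr (_ * ewo_term _); apply: functional_extensionality => i; rewrite permM.
Qed.

Lemma ewo_alt v (i j : 'I_N) : i != j -> v i = v j -> ewo v = 0.
Proof.
move=> ij vij; have := ewo_perm v (tperm i j).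
have -> : (fun k => v (tperm i j k)) = v.
  by apply: functional_extensionality => k; case: tpermP => [->|->|].
rewrite odd_tperm ij expr1 mulN1r => /eqP; rewrite -addr_eq0 -mulr2n mulrn_eq0 /=.
by move/eqP.
Qed.

Lemma ewo_slot v (k : 'I_N) : exists L : V -> R^o,
  [/\ linear L, forall u, radical u -> L u = 0 & forall z, ewo (set_slot v k z) = L z].
Proof.
have term_slot (s : 'S_N) := ewo_term_slot (fun i => v (s i)) (s^-1 k)%g.
exists (fun z => \sum_(s : 'S_N) (-1) ^+ s * ewo_term (set_slot (fun i => v (s i)) (s^-1 k)%g z)).
split=> [a x y|u u_rad|z].
- rewrite /GRing.scale /= mulr_sumr -big_split /=; apply: eq_bigr => s _.
  have [l [C [l_lin _ l_eq]]] := term_slot s.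
  by rewrite !l_eq l_lin /GRing.scale /= mulrDl mulrDr -(mulrA a) mulrCA.
- rewrite big1 // => s _; have [l [C [_ l_rad ->]]] := term_slot s.
  by rewrite l_rad // mul0r mulr0.
- rewrite ewoE; apply: eq_bigr => s _; congr (_ * ewo_term _).
  apply: functional_extensionality => i.
  by rewrite /set_slot -{1}(permKV s k) (inj_eq perm_inj).
Qed.

End EtaWedgeOmegaPow.

Lemma prefix_span_mem (K : fieldType) (V : vectType K) (u : V) (w : nat -> V) (m : nat) :
  u != 0 -> (\dim {:V} <= m)%N ->
  exists2 j, (j < m)%N & w j \in (<[u]> + <<[seq w i | i <- iota 0 j]>>)%VS.
Proof.
move=> u0 dimV; pose W j := (<[u]> + <<[seq w i | i <- iota 0 j]>>)%VS.
have [/existsP [j wj] | none] := boolP [exists j : 'I_m, w j \in W j]; first by exists j.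
(* Otherwise the [W j] grow strictly, and [W m] would exceed the dimension of [V]. *)
suff dimW j : (j <= m)%N -> (j < \dim (W j))%N.
  by have := leq_trans (dimW m (leqnn m)) (leq_trans (dimvS (subvf (W m))) dimV); rewrite ltnn.
elim: j => [_|j IHj jm]; first by rewrite /W span_nil addv0 dim_vline u0.
have Wj : W j.+1 = (W j + <[w j]>)%VS by rewrite /W -addn1 iotaD map_cat span_cat span_seq1 addvA.
apply: leq_ltn_trans (IHj (ltnW jm)) _.
rewrite Wj (ltn_leqif (dimv_leqif_sup (addvSl _ _))) subv_add subvv /= -memvE.
by apply: contra none => wj; apply/existsP; exists (Ordinal jm).
Qed.

Section Nondegeneracy.
Variables (R : realType) (V : vectType R) (n : nat) (eta : 'Hom(V, R^o)) (om : V -> V -> R).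
Hypothesis form : is_2form om.
Local Notation N := n.*2.+1.
Local Notation ewo := (@eta_wedge_omega_pow R V n eta om).

(* Pick [j] with [v j] in [<[u]> + span (v 0, ..., v (j-1))]: the linear functional
   [ewo] through slot [j] kills [u] by radicality and the earlier [v i] by alternation. *)
Lemma ewo_radical_eq0 (u : V) : \dim {:V} = N -> u != 0 -> radical eta om u ->
  forall v, ewo v = 0.
Proof.
move=> dimV u0 u_rad v; pose w k := v (inord k).
have [j jN wj] := prefix_span_mem w u0 (eq_leq dimV).
have [L [L_lin L_rad L_eq]] := ewo_slot eta form v (inord j).
have [f fE] := hom_of_linear L_lin.
suff : w j \in lker f by rewrite memv_ker fE -L_eq /w set_slot_id => /eqP.
apply: subvP wj; rewrite subv_add -memvE memv_ker fE L_rad // eqxx /=.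
apply/span_subvP => _ /mapP [i /[!mem_iota] /= ij ->].
rewrite memv_ker fE -L_eq; apply/eqP/(ewo_alt eta om (i := inord j) (j := inord i)).
  by rewrite -val_eqE /= !inordK //; lia.
by rewrite /set_slot eqxx ifN // -val_eqE /= !inordK //; lia.
Qed.

End Nondegeneracy.

Lemma reeb_unique (R : realType) (V : vectType R) (n : nat) (eta : 'Hom(V, R^o))
    (om : V -> V -> R) (xi xi' : V) :
  \dim {:V} = n.*2.+1 -> almost_cosymplectic n eta om ->
  is_reeb eta om xi -> is_reeb eta om xi' -> xi = xi'.
Proof.
move=> dimV [form [v ewo_v]] [eta_xi xi0] [eta_xi' xi'0].
apply/eqP; rewrite -subr_eq0; apply: contraNT ewo_v => xi_xi'.
rewrite (ewo_radical_eq0 form dimV xi_xi') //.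
split=> [|y]; first by rewrite linearB /= eta_xi eta_xi' subrr.
rewrite (linear_funD (form_linearl form y)) (linear_funN (form_linearl form y)).
by rewrite xi0 xi'0 subrr.
Qed.

Section ReebSplitting.
Variables (R : realType) (V : vectType R) (eta : 'Hom(V, R^o)) (xi : V).
Hypothesis eta_xi : (eta xi : R) = 1.

Definition hproj (x : V) : hker eta := vsproj (lker eta) (x - (eta x : R) *: xi).

Lemma sub_reeb_in_ker x : x - (eta x : R) *: xi \in lker eta.
Proof. by rewrite memv_ker linearB linearZ /= eta_xi; apply/eqP; rewrite /GRing.scale /= mulr1 subrr. Qed.

Lemma hproj_decomp x : vsval (hproj x) + (eta x : R) *: xi = x.
Proof. by rewrite vsprojK ?subrK // sub_reeb_in_ker. Qed.

Lemma eta_hsum (h : hker eta) (c : R) : (eta (vsval h + c *: xi) : R) = c.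
Proof.
have /eqP h0 : eta (vsval h) == 0 by rewrite -memv_ker subvsP.
by rewrite linearD linearZ /= h0 eta_xi add0r /GRing.scale /= mulr1.
Qed.

Lemma hproj_hsum (h : hker eta) (c : R) : hproj (vsval h + c *: xi) = h.
Proof. by rewrite /hproj eta_hsum addrK vsvalK. Qed.

Lemma hproj_linear : linear hproj.
Proof.
move=> a x y; rewrite /hproj -linearP; congr vsproj.
by rewrite linearP /= scalerDl scalerBr scalerA opprD addrACA.
Qed.

Lemma lie_in_ker (br : V -> V -> V) : closed_eta br eta -> forall x y, br x y \in lker eta.
Proof. by move=> closed x y; rewrite memv_ker; have := closed x y; rewrite /d1 => /eqP; rewrite oppr_eq0. Qed.

Lemma lie_hsum (br : V -> V -> V) : is_lie_bracket br -> closed_eta br eta ->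
  forall (h k : hker eta) (a b : R), br (vsval h + a *: xi) (vsval k + b *: xi) =
    vsval (hbr br h k + a *: hD br xi k - b *: hD br xi h).
Proof.
move=> lie closed h k a b.
by rewrite lie_expand // !linearB !linearD !linearZ /= !vsprojK // lie_in_ker.
Qed.

Lemma form_hsum (om : V -> V -> R) : is_2form om -> is_reeb eta om xi ->
  forall (h k : hker eta) (a b : R), om (vsval h + a *: xi) (vsval k + b *: xi) = hOmega om h k.
Proof. by move=> form [_ xi0] h k a b; rewrite form_expand. Qed.

End ReebSplitting.

Section HkerExtension.
Variables (R : realType) (V W : vectType R) (eta : 'Hom(V, R^o)) (xi : V).
Variables (U : {vspace W}) (xi' : W).
Hypothesis eta_xi : (eta xi : R) = 1.

Definition hext (psi : hker eta -> subvs_of U) (x : V) : W :=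
  vsval (psi (hproj eta xi x)) + (eta x : R) *: xi'.

Lemma hext_hsum psi (h : hker eta) (c : R) :
  hext psi (vsval h + c *: xi) = vsval (psi h) + c *: xi'.
Proof. by rewrite /hext hproj_hsum // eta_hsum. Qed.

Lemma hext_val psi (h : hker eta) : hext psi (vsval h) = vsval (psi h).
Proof. by have := hext_hsum psi h 0; rewrite !scale0r !addr0. Qed.

Lemma hext_linear (psi : 'Hom(hker eta, subvs_of U)) : linear (hext psi).
Proof.
move=> a x y; rewrite /hext (hproj_linear eta xi) !linearP /= scalerDl.
by rewrite scalerDr -scalerA addrACA.
Qed.

End HkerExtension.

Section Isomorphisms.
Variables (R : realType) (V1 V2 : vectType R).
Variables (br1 : V1 -> V1 -> V1) (eta1 : 'Hom(V1, R^o)) (om1 : V1 -> V1 -> R) (xi1 : V1).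
Variables (br2 : V2 -> V2 -> V2) (eta2 : 'Hom(V2, R^o)) (om2 : V2 -> V2 -> R) (xi2 : V2).

Lemma reeb_iso (Psi : 'Hom(V1, V2)) : bijective Psi ->
  (forall x y, om2 (Psi x) (Psi y) = om1 x y) -> (forall x, (eta2 (Psi x) : R) = eta1 x) ->
  is_reeb eta1 om1 xi1 -> is_reeb eta2 om2 (Psi xi1).
Proof.
move=> [Phi _ PsiK] Psi_om Psi_eta [eta_xi xi0]; split=> [|y]; first by rewrite Psi_eta.
by rewrite -(PsiK y) Psi_om.
Qed.

Lemma hker_restrict (Psi : 'Hom(V1, V2)) :
  closed_eta br1 eta1 -> closed_eta br2 eta2 -> bijective Psi ->
  (forall x y, Psi (br1 x y) = br2 (Psi x) (Psi y)) ->
  (forall x y, om2 (Psi x) (Psi y) = om1 x y) -> (forall x, (eta2 (Psi x) : R) = eta1 x) ->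
  Psi xi1 = xi2 ->
  exists psi : 'Hom(hker eta1, hker eta2),
    [/\ bijective psi,
        (forall x y, psi (hbr br1 x y) = hbr br2 (psi x) (psi y)),
        (forall x y, hOmega om2 (psi x) (psi y) = hOmega om1 x y) &
        (forall x, psi (hD br1 xi1 x) = hD br2 xi2 (psi x))].
Proof.
move=> closed1 closed2 [Phi PsiK PhiK] Psi_br Psi_om Psi_eta Psi_xi.
have Psi_ker x : (Psi x \in lker eta2) = (x \in lker eta1) by rewrite !memv_ker Psi_eta.
have Phi_ker y : (Phi y \in lker eta1) = (y \in lker eta2) by rewrite -Psi_ker PhiK.
pose p (h : hker eta1) : hker eta2 := vsproj (lker eta2) (Psi (vsval h)).
have pE h : vsval (p h) = Psi (vsval h) by rewrite vsprojK // Psi_ker subvsP.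
have [psi psiE] : {psi : 'Hom(hker eta1, hker eta2) | psi =1 p}.
  by apply: hom_of_linear => a x y; apply: subvs_inj; rewrite /= !pE !linearP.
have vpsi h : vsval (psi h) = Psi (vsval h) by rewrite psiE pE.
exists psi; split.
- exists (fun h => vsproj (lker eta1) (Phi (vsval h))) => h.
    by rewrite (vpsi h) PsiK vsvalK.
  by apply: subvs_inj; rewrite vpsi vsprojK ?PhiK // Phi_ker subvsP.
- move=> h k; apply: subvs_inj.
  by rewrite vpsi /hbr !vsprojK ?(lie_in_ker closed1) ?(lie_in_ker closed2) // !vpsi Psi_br.
- by move=> h k; rewrite /hOmega !vpsi Psi_om.
- move=> h; apply: subvs_inj.
  by rewrite vpsi /hD !vsprojK ?(lie_in_ker closed1) ?(lie_in_ker closed2) // !vpsi Psi_br Psi_xi.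
Qed.

Lemma hker_extend (psi : 'Hom(hker eta1, hker eta2)) :
  is_lie_bracket br1 -> is_lie_bracket br2 -> is_2form om1 -> is_2form om2 ->
  closed_eta br1 eta1 -> closed_eta br2 eta2 ->
  is_reeb eta1 om1 xi1 -> is_reeb eta2 om2 xi2 ->
  bijective psi ->
  (forall x y, psi (hbr br1 x y) = hbr br2 (psi x) (psi y)) ->
  (forall x y, hOmega om2 (psi x) (psi y) = hOmega om1 x y) ->
  (forall x, psi (hD br1 xi1 x) = hD br2 xi2 (psi x)) ->
  acs_isomorphic br1 eta1 om1 br2 eta2 om2.
Proof.
move=> lie1 lie2 form1 form2 closed1 closed2 reeb1 reeb2 [phi psiK phiK] psi_br psi_om psi_D.
have [eta_xi1 _] := reeb1; have [eta_xi2 _] := reeb2.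
have [Psi PsiE] := hom_of_linear (hext_linear xi1 xi2 psi).
exists Psi; split.
- exists (hext xi2 xi1 phi) => [x|y].
    by rewrite PsiE -{1}[x](hproj_decomp eta_xi1) !hext_hsum // psiK hproj_decomp.
  by rewrite -{1}[y](hproj_decomp eta_xi2) hext_hsum // PsiE hext_hsum // phiK hproj_decomp.
- move=> x y; rewrite !PsiE -[x](hproj_decomp eta_xi1) -[y](hproj_decomp eta_xi1).
  rewrite !hext_hsum // !lie_hsum // hext_val //.
  by rewrite !linearB !linearD !linearZ /= psi_br !psi_D.
- move=> x y; rewrite !PsiE -[x](hproj_decomp eta_xi1) -[y](hproj_decomp eta_xi1).
  by rewrite !hext_hsum // !form_hsum.
- by move=> x; rewrite PsiE /hext eta_hsum.
Qed.

End Isomorphisms.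

Theorem mainTheorem8 (R : realType) (n : nat) (V1 V2 : vectType R)
    (br1 : V1 -> V1 -> V1) (eta1 : 'Hom(V1, R^o)) (om1 : V1 -> V1 -> R) (xi1 : V1)
    (br2 : V2 -> V2 -> V2) (eta2 : 'Hom(V2, R^o)) (om2 : V2 -> V2 -> R) (xi2 : V2) :
  \dim (fullv : {vspace V1}) = n.*2.+1 ->
  \dim (fullv : {vspace V2}) = n.*2.+1 ->
  is_lie_bracket br1 -> is_lie_bracket br2 ->
  almost_cosymplectic n eta1 om1 -> almost_cosymplectic n eta2 om2 ->
  closed_eta br1 eta1 -> closed_eta br2 eta2 ->
  is_reeb eta1 om1 xi1 -> is_reeb eta2 om2 xi2 ->
  acs_isomorphic br1 eta1 om1 br2 eta2 om2 <->
  exists psi : 'Hom(hker eta1, hker eta2),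
    [/\ bijective psi,
        (forall x y, psi (hbr br1 x y) = hbr br2 (psi x) (psi y)),
        (forall x y, hOmega om2 (psi x) (psi y) = hOmega om1 x y) &
        (forall x, psi (hD br1 xi1 x) = hD br2 xi2 (psi x))].
Proof.
move=> _ dim2 lie1 lie2 acs1 acs2 closed1 closed2 reeb1 reeb2; split.
- case=> Psi [Psi_bij Psi_br Psi_om Psi_eta].
  apply: (hker_restrict closed1 closed2 Psi_bij Psi_br Psi_om Psi_eta).
  exact: reeb_unique dim2 acs2 (reeb_iso Psi_bij Psi_om Psi_eta reeb1) reeb2.
- case=> psi [psi_bij psi_br psi_om psi_D].
  exact: hker_extend lie1 lie2 acs1.1 acs2.1 closed1 closed2 reeb1 reeb2 psi_bij psi_br psi_om psi_D.
Qed.
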